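(* Let $n\ge 2$ and let $\gamma:I\to\mathbb{R}^2$ ($0\in I$) be a front without inflection points with $\gamma'(0)=\mathbf{0}$. If $t=0$ is a singular point of each of $Ev(\gamma),Ev^2(\gamma),\dots,Ev^{n-1}(\gamma)$, then $\gamma$ is not $\mathcal{A}$-equivalent to $Cusp_{(n,n+1)}(t)=(t^n,t^{n+1})$ at $t=0$.
   Context: A $C^\infty$ curve $\gamma:I\to\mathbb{R}^2$ is a front if there is a $C^\infty$ map $\nu:I\to S^1$ with $\gamma'\cdot\nu=0$ and $(\gamma,\nu)$ an immersion. With $M$ the anticlockwise rotation by $\pi/2$, $\mu=M(\nu)$, $\ell=\nu'\cdot\mu$, $\beta=\gamma'\cdot\mu$; no inflection points means $\ell\neq0$ on $I$. Evolutes: $\beta_0=\beta$, $\beta_k=\frac{d}{dt}(\beta_{k-1}/\ell)$, $Ev^0(\gamma)=\gamma$, $Ev^{k}(\gamma)=Ev^{k-1}(\gamma)-\frac{\beta_{k-1}}{\ell}M^{k-1}(\nu)$, $Ev=Ev^1$. A point is singular for a curve if its derivative vanishes there. $\mathcal{A}$-equivalence means equivalence via $C^\infty$ diffeomorphism germs of source and target. *)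

From Stdlib Require Import Reals Lra List.
From Coquelicot Require Import Coquelicot.
Open Scope R_scope.

Definition in_I (a b : Rbar) (t : R) : Prop := Rbar_lt a t /\ Rbar_lt t b.

Definition smooth_on (a b : Rbar) (f : R -> R) : Prop :=
  forall (k : nat) (t : R), in_I a b t -> ex_derive (Derive_n f k) t.

Definition smooth_near (x : R) (f : R -> R) : Prop :=
  locally x (fun t => forall k : nat, ex_derive (Derive_n f k) t).

(** Partial derivatives of F : R^2 -> R (true = first variable). *)
Definition pd (b : bool) (F : R * R -> R) : R * R -> R :=
  fun p => if b then Derive (fun s => F (s, snd p)) (fst p)
           else Derive (fun s => F (fst p, s)) (snd p).

Definition pds (ds : list bool) (F : R * R -> R) : R * R -> R :=
  fold_right pd F ds.

Definition smooth2_near (p : R * R) (F : R * R -> R) : Prop :=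
  locally p (fun q => forall ds : list bool,
    continuous (pds ds F) q /\
    ex_derive (fun s => pds ds F (s, snd q)) (fst q) /\
    ex_derive (fun s => pds ds F (fst q, s)) (snd q)).

Definition diffeo_germ1 (phi : R -> R) : Prop :=
  phi 0 = 0 /\ smooth_near 0 phi /\
  exists psi : R -> R, smooth_near 0 psi /\
    locally 0 (fun t => psi (phi t) = t) /\
    locally 0 (fun s => phi (psi s) = s).

Definition diffeo_germ2 (p q : R * R) (Phi : R * R -> R * R) : Prop :=
  Phi p = q /\
  smooth2_near p (fun x => fst (Phi x)) /\ smooth2_near p (fun x => snd (Phi x)) /\
  exists Psi : R * R -> R * R,
    smooth2_near q (fun y => fst (Psi y)) /\ smooth2_near q (fun y => snd (Psi y)) /\
    locally p (fun x => Psi (Phi x) = x) /\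
    locally q (fun y => Phi (Psi y) = y).

Definition A_equiv_at0 (f g : R -> R * R) : Prop :=
  exists (phi : R -> R) (Phi : R * R -> R * R),
    diffeo_germ1 phi /\ diffeo_germ2 (f 0) (g 0) Phi /\
    locally 0 (fun t => Phi (f t) = g (phi t)).

Definition Cusp (n : nat) : R -> R * R := fun t => (t ^ n, t ^ (n + 1)).

Definition Mrot (v : R * R) : R * R := (- snd v, fst v).
Fixpoint Mpow (k : nat) (v : R * R) : R * R :=
  match k with O => v | S k' => Mrot (Mpow k' v) end.

Definition dot (u v : R * R) : R := fst u * fst v + snd u * snd v.

(** Curve gamma = (g1,g2), unit normal nu = (n1,n2). *)
Definition dcurve (f1 f2 : R -> R) (t : R) : R * R := (Derive f1 t, Derive f2 t).
Definition nuv (n1 n2 : R -> R) (t : R) : R * R := (n1 t, n2 t).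
Definition muv (n1 n2 : R -> R) (t : R) : R * R := Mrot (nuv n1 n2 t).

Definition ell (n1 n2 : R -> R) (t : R) : R := dot (dcurve n1 n2 t) (muv n1 n2 t).
Definition beta (g1 g2 n1 n2 : R -> R) (t : R) : R :=
  dot (dcurve g1 g2 t) (muv n1 n2 t).

Fixpoint betak (g1 g2 n1 n2 : R -> R) (k : nat) : R -> R :=
  match k with
  | O => beta g1 g2 n1 n2
  | S k' => Derive (fun t => betak g1 g2 n1 n2 k' t / ell n1 n2 t)
  end.

Fixpoint Ev (g1 g2 n1 n2 : R -> R) (k : nat) : R -> R * R :=
  match k with
  | O => fun t => (g1 t, g2 t)
  | S k' => fun t =>
      let c := betak g1 g2 n1 n2 k' t / ell n1 n2 t in
      let w := Mpow k' (nuv n1 n2 t) in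
      (fst (Ev g1 g2 n1 n2 k' t) - c * fst w, snd (Ev g1 g2 n1 n2 k' t) - c * snd w)
  end.

Definition singular_at (c : R -> R * R) (t : R) : Prop :=
  Derive (fun s => fst (c s)) t = 0 /\ Derive (fun s => snd (c s)) t = 0.

Definition front_with (a b : Rbar) (g1 g2 n1 n2 : R -> R) : Prop :=
  smooth_on a b g1 /\ smooth_on a b g2 /\ smooth_on a b n1 /\ smooth_on a b n2 /\
  (forall t, in_I a b t -> n1 t ^ 2 + n2 t ^ 2 = 1) /\
  (forall t, in_I a b t -> dot (dcurve g1 g2 t) (nuv n1 n2 t) = 0) /\
  (forall t, in_I a b t ->
     ~ (Derive g1 t = 0 /\ Derive g2 t = 0 /\ Derive n1 t = 0 /\ Derive n2 t = 0)).

From Stdlib Require Import Reals Lra Lia List.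
From Coquelicot Require Import Coquelicot.
Open Scope R_scope.

(** Along a front, [gamma' = beta mu] and, by induction, [(Ev^k)' = beta_k M^(k+1) nu];
    as [M^(k+1) nu] is a unit vector, singularity of [Ev^k] at [0] means [beta_k(0) = 0]
    for [k < n].  Since [beta_(k+1) = (beta_k / ell)'], each such vanishing raises the
    order of [beta_k] at [0] by one over that of [beta_(k+1)]; starting from the bounded
    [beta_n] this gives [beta = O(t^n)], hence [gamma(t) - gamma(0) = O(t^(n+1))].
    If [Phi o gamma = Cusp o phi], then [|phi t|^n = |Phi_1(gamma t) - Phi_1(gamma 0)|
    = O(t^(n+1))] as [Phi] is Lipschitz, while [|t| = |phi^-1(phi t)| = O(|phi t|)];
    together [t^n = O(t^(n+1))], which is absurd. *)

Lemma is_derive_Rmult (f g : R -> R) x df dg :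
  is_derive f x df -> is_derive g x dg ->
  is_derive (fun t => f t * g t) x (df * g x + f x * dg).
Proof. intros Hf Hg; apply (is_derive_mult f g x df dg Hf Hg), Rmult_comm. Qed.

Lemma is_derive_eq_val (f : R -> R) x d d' : is_derive f x d -> d = d' -> is_derive f x d'.
Proof. now intros H <-. Qed.

Lemma Rabs_sub_le_of_between a b x :
  Rmin a b <= x <= Rmax a b -> Rabs (x - a) <= Rabs (b - a).
Proof.
  unfold Rmin, Rmax; destruct (Rle_dec a b); unfold Rabs; repeat destruct Rcase_abs; lra.
Qed.

Lemma mean_value_bound (f : R -> R) a b K :
  (forall x, Rmin a b <= x <= Rmax a b -> ex_derive f x /\ Rabs (Derive f x) <= K) ->
  Rabs (f b - f a) <= K * Rabs (b - a).
Proof.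
  intros H.
  destruct (MVT_gen f a b (Derive f)) as [c [Hc ->]].
  - intros x Hx; apply Derive_correct, H; lra.
  - intros x Hx; apply continuity_pt_filterlim.
    apply (ex_derive_continuous (K := R_AbsRing) (V := R_NormedModule)), H; lra.
  - rewrite Rabs_mult; apply Rmult_le_compat_r; [apply Rabs_pos | apply H; lra].
Qed.

Lemma locally_Rabs_le_succ_of_continuous {T : UniformSpace} (h : T -> R) p :
  continuous h p -> locally p (fun y => Rabs (h y) <= Rabs (h p) + 1).
Proof.
  intros Hh; apply filterlim_locally with (eps := mkposreal 1 Rlt_0_1) in Hh.
  revert Hh; apply filter_imp; intros y Hy; change (Rabs (h y - h p) < 1) in Hy.
  pose proof (Rabs_triang_inv (h y) (h p)); lra.
Qed.

Lemma locally_R2_square (P : R * R -> Prop) p : locally p P ->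
  exists d, 0 < d /\ forall y1 y2,
    Rabs (y1 - fst p) < d -> Rabs (y2 - snd p) < d -> P (y1, y2).
Proof.
  intros [e He]; exists e; split; [apply cond_pos|].
  intros y1 y2 H1 H2; apply He; split; assumption.
Qed.

(* Axis-parallel mean value theorems, with the partial derivatives bounded near [p]. *)
Lemma smooth2_near_Lipschitz (p : R * R) (F : R * R -> R) : smooth2_near p F ->
  exists K d, 0 <= K /\ 0 < d /\ forall x1 x2,
    Rabs (x1 - fst p) < d -> Rabs (x2 - snd p) < d ->
    Rabs (F (x1, x2) - F p) <= K * (Rabs (x1 - fst p) + Rabs (x2 - snd p)).
Proof.
  destruct p as [p1 p2]; intros Hs.
  destruct (locally_singleton _ _ Hs (true :: nil)) as [C1 _].
  destruct (locally_singleton _ _ Hs (false :: nil)) as [C2 _].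
  set (K1 := Rabs (pds (true :: nil) F (p1, p2)) + 1).
  set (K2 := Rabs (pds (false :: nil) F (p1, p2)) + 1).
  assert (HK1 : 0 < K1) by (pose proof (Rabs_pos (pds (true :: nil) F (p1, p2))); unfold K1; lra).
  assert (HK2 : 0 < K2) by (pose proof (Rabs_pos (pds (false :: nil) F (p1, p2))); unfold K2; lra).
  destruct (locally_R2_square _ _ (filter_and _ _ Hs (filter_and _ _
      (locally_Rabs_le_succ_of_continuous _ _ C1)
      (locally_Rabs_le_succ_of_continuous _ _ C2)))) as [d [Hd Hsq]].
  exists (K1 + K2), d; split; [lra|]; split; [exact Hd|].
  simpl; intros x1 x2 Hx1 Hx2.
  assert (A1 : Rabs (F (x1, x2) - F (p1, x2)) <= K1 * Rabs (x1 - p1)).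
  { apply (mean_value_bound (fun s => F (s, x2))); intros s Hs'.
    pose proof (Rabs_sub_le_of_between _ _ _ Hs').
    destruct (Hsq s x2 ltac:(simpl; lra) Hx2) as [Hq [B1 _]].
    split; [exact (proj1 (proj2 (Hq nil))) | exact B1]. }
  assert (A2 : Rabs (F (p1, x2) - F (p1, p2)) <= K2 * Rabs (x2 - p2)).
  { apply (mean_value_bound (fun s => F (p1, s))); intros s Hs'.
    pose proof (Rabs_sub_le_of_between _ _ _ Hs').
    assert (Hp : Rabs (p1 - p1) < d) by (rewrite Rminus_eq_0, Rabs_R0; exact Hd).
    destruct (Hsq p1 s Hp ltac:(simpl; lra)) as [Hq [_ B2]].
    split; [exact (proj2 (proj2 (Hq nil))) | exact B2]. }
  replace (F (x1, x2) - F (p1, p2))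
    with ((F (x1, x2) - F (p1, x2)) + (F (p1, x2) - F (p1, p2))) by ring.
  pose proof (Rabs_triang (F (x1, x2) - F (p1, x2)) (F (p1, x2) - F (p1, p2))).
  pose proof (Rabs_pos (x1 - p1)); pose proof (Rabs_pos (x2 - p2)); nra.
Qed.

Definition BigO (m : nat) (f : R -> R) : Prop :=
  exists C, 0 <= C /\ locally 0 (fun s => Rabs (f s) <= C * Rabs s ^ m).

Lemma BigO_ext_loc m f g : BigO m f -> locally 0 (fun s => f s = g s) -> BigO m g.
Proof.
  intros [C [HC Hf]] Hfg; exists C; split; [exact HC|].
  generalize (filter_and _ _ Hf Hfg); apply filter_imp; intros s [H E].
  now rewrite <- E.
Qed.

Lemma BigO_of_continuous f : continuous f 0 -> BigO 0 f.
Proof.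
  intros Hf; exists (Rabs (f 0) + 1); split; [pose proof (Rabs_pos (f 0)); lra|].
  generalize (locally_Rabs_le_succ_of_continuous _ _ Hf); apply filter_imp.
  intros s H; simpl; lra.
Qed.

Lemma BigO_mult_continuous m f l : BigO m f -> continuous l 0 ->
  BigO m (fun s => f s * l s).
Proof.
  intros [C [HC Hf]] Hl; exists (C * (Rabs (l 0) + 1)).
  pose proof (Rabs_pos (l 0)); split; [nra|].
  generalize (filter_and _ _ Hf (locally_Rabs_le_succ_of_continuous _ _ Hl)).
  apply filter_imp; intros s [Bf Bl].
  rewrite Rabs_mult.
  replace (C * (Rabs (l 0) + 1) * Rabs s ^ m) with (C * Rabs s ^ m * (Rabs (l 0) + 1)) by ring.
  apply Rmult_le_compat; auto; apply Rabs_pos.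
Qed.

Lemma BigO_S_of_Derive m f : locally 0 (ex_derive f) -> BigO m (Derive f) ->
  BigO (S m) (fun s => f s - f 0).
Proof.
  intros Hd [C [HC HB]]; exists C; split; [exact HC|].
  destruct (filter_and _ _ Hd HB) as [e He]; exists e; intros s Hs.
  change (Rabs (s - 0) < e) in Hs.
  replace (C * Rabs s ^ S m) with (C * Rabs s ^ m * Rabs (s - 0))
    by (rewrite Rminus_0_r; simpl; ring).
  apply mean_value_bound; intros x Hx.
  pose proof (Rabs_sub_le_of_between _ _ _ Hx) as Hxs; rewrite !Rminus_0_r in Hxs.
  destruct (He x) as [Ex Bx]; [change (Rabs (x - 0) < e); rewrite Rminus_0_r in *; lra|].
  split; [exact Ex|].
  eapply Rle_trans; [exact Bx|]; apply Rmult_le_compat_l; [exact HC|].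
  apply pow_incr; split; [apply Rabs_pos | exact Hxs].
Qed.

Lemma BigO_S_of_smooth_near f : smooth_near 0 f -> BigO 1 (fun s => f s - f 0).
Proof.
  intros Hf; apply BigO_S_of_Derive.
  - exact (filter_imp _ _ (fun s H => H 0%nat) Hf).
  - apply BigO_of_continuous, (ex_derive_continuous (K := R_AbsRing) (V := R_NormedModule)).
    exact (locally_singleton _ _ Hf 1%nat).
Qed.

Lemma not_BigO_S_pow n : ~ BigO (S n) (fun t => t ^ n).
Proof.
  intros [C [HC [e He]]].
  set (t := Rmin (e / 2) (/ (2 * (C + 1)))).
  pose proof (cond_pos e) as He0.
  assert (Ht0 : 0 < t) by (apply Rmin_pos; [lra | apply Rinv_0_lt_compat; lra]).
  assert (Hte : t < e) by (unfold t; pose proof (Rmin_l (e / 2) (/ (2 * (C + 1)))); lra).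
  assert (HtC : C * t < 1).
  { assert (C * t <= C * / (2 * (C + 1)))
      by (apply Rmult_le_compat_l; [exact HC | apply Rmin_r]).
    assert (C * / (2 * (C + 1)) < 1).
    { apply (Rmult_lt_reg_r (2 * (C + 1))); [lra|].
      rewrite Rmult_assoc, Rinv_l by lra; lra. }
    lra. }
  assert (Hb : Rabs (t ^ n) <= C * Rabs t ^ S n)
    by (apply He; change (Rabs (t - 0) < e); rewrite Rminus_0_r, Rabs_pos_eq; lra).
  rewrite <- RPow_abs, Rabs_pos_eq in Hb by lra.
  assert (Htn : 0 < t ^ n) by (apply pow_lt; exact Ht0).
  assert (t ^ n * 1 <= t ^ n * (C * t)) by (simpl in Hb; lra).
  apply Rmult_le_reg_l in H; lra.
Qed.

Lemma not_A_equiv_Cusp_of_BigO n (c1 c2 : R -> R) : (1 <= n)%nat ->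
  continuous c1 0 -> continuous c2 0 ->
  BigO (S n) (fun s => c1 s - c1 0) -> BigO (S n) (fun s => c2 s - c2 0) ->
  ~ A_equiv_at0 (fun t => (c1 t, c2 t)) (Cusp n).
Proof.
  intros Hn Hc1 Hc2 [C1 [HC1 B1]] [C2 [HC2 B2]]
    [phi [Phi [[Hphi0 [Hphis [psi [Hpsis [Hpsiphi _]]]]] [[HPhi0 [HPhi1 _]] Heq]]]].
  apply (not_BigO_S_pow n).
  destruct (smooth2_near_Lipschitz _ _ HPhi1) as [K [d [HK [Hd HLip]]]]; simpl in HLip.
  destruct (BigO_S_of_smooth_near psi Hpsis) as [Kp [HKp Bpsi]].
  assert (Hpsi0 : psi 0 = 0)
    by (rewrite <- Hphi0 at 1; exact (locally_singleton _ _ Hpsiphi)).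
  assert (Hphi : filterlim phi (locally 0) (locally 0)).
  { rewrite <- Hphi0 at 2.
    exact (ex_derive_continuous (K := R_AbsRing) (V := R_NormedModule) _ _
             (locally_singleton _ _ Hphis 0%nat)). }
  assert (Bpsiphi : locally 0 (fun t => Rabs (psi (phi t) - psi 0) <= Kp * Rabs (phi t) ^ 1))
    by exact (Hphi _ Bpsi).
  assert (Hd1 := proj1 (filterlim_locally _ _) Hc1 (mkposreal d Hd)).
  assert (Hd2 := proj1 (filterlim_locally _ _) Hc2 (mkposreal d Hd)).
  assert (HPhi00 : fst (Phi (c1 0, c2 0)) = 0) by (rewrite HPhi0; apply pow_i; lia).
  exists (Kp ^ n * (K * (C1 + C2))); split; [apply Rmult_le_pos; [apply pow_le|]; nra|].
  generalize (filter_and _ _ Heq (filter_and _ _ Hpsiphi (filter_and _ _ Bpsiphi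
    (filter_and _ _ (filter_and _ _ Hd1 Hd2) (filter_and _ _ B1 B2))))).
  apply filter_imp; intros t [E [Et [Bt [[D1 D2] [Bt1 Bt2]]]]].
  change (Rabs (c1 t - c1 0) < d) in D1; change (Rabs (c2 t - c2 0) < d) in D2.
  assert (Hphin : Rabs (phi t) ^ n <= K * (C1 + C2) * Rabs t ^ S n).
  { rewrite RPow_abs.
    replace (phi t ^ n) with (fst (Phi (c1 t, c2 t)) - fst (Phi (c1 0, c2 0)))
      by (rewrite E, HPhi00; simpl; ring).
    eapply Rle_trans; [exact (HLip _ _ D1 D2)|].
    replace (K * (C1 + C2) * Rabs t ^ S n) with (K * (C1 * Rabs t ^ S n + C2 * Rabs t ^ S n))
      by ring.
    apply Rmult_le_compat_l; lra. }
  assert (Ht : Rabs t <= Kp * Rabs (phi t)).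
  { rewrite Et, Hpsi0, Rminus_0_r, pow_1 in Bt; exact Bt. }
  rewrite <- RPow_abs.
  apply Rle_trans with ((Kp * Rabs (phi t)) ^ n).
  - apply pow_incr; split; [apply Rabs_pos | exact Ht].
  - rewrite Rpow_mult_distr, Rmult_assoc.
    apply Rmult_le_compat_l; [apply pow_le; exact HKp | exact Hphin].
Qed.

Fixpoint Ck_on (U : R -> Prop) (m : nat) (f : R -> R) : Prop :=
  match m with
  | O => True
  | S m' => exists f', (forall t, U t -> is_derive f t (f' t)) /\ Ck_on U m' f'
  end.

Definition Cinf_on (U : R -> Prop) (f : R -> R) : Prop := forall m, Ck_on U m f.

Section SmoothOn.
Variable U : R -> Prop.

Lemma Ck_on_S m f : Ck_on U (S m) f -> Ck_on U m f.
Proof.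
  revert f; induction m as [|m IH]; intros f [f' [Hf Hf']]; [exact I|].
  exists f'; split; [exact Hf | apply IH, Hf'].
Qed.

Lemma Ck_on_ext m f g : open U -> (forall t, U t -> f t = g t) -> Ck_on U m f -> Ck_on U m g.
Proof.
  intros HU Hfg; destruct m as [|m]; [trivial|]; intros [f' [Hf Hf']].
  exists f'; split; [|exact Hf'].
  intros t Ht; apply is_derive_ext_loc with f; [|exact (Hf t Ht)].
  exact (filter_imp _ _ Hfg (HU t Ht)).
Qed.

Lemma Ck_on_plus m f g : Ck_on U m f -> Ck_on U m g -> Ck_on U m (fun t => f t + g t).
Proof.
  revert f g; induction m as [|m IH]; [trivial|]; intros f g [f' [Hf Hf']] [g' [Hg Hg']].
  exists (fun t => f' t + g' t); split; [|exact (IH _ _ Hf' Hg')].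
  intros t Ht; exact (is_derive_plus f g t _ _ (Hf t Ht) (Hg t Ht)).
Qed.

Lemma Ck_on_opp m f : Ck_on U m f -> Ck_on U m (fun t => - f t).
Proof.
  revert f; induction m as [|m IH]; [trivial|]; intros f [f' [Hf Hf']].
  exists (fun t => - f' t); split; [|exact (IH _ Hf')].
  intros t Ht; exact (is_derive_opp f t _ (Hf t Ht)).
Qed.

Lemma Ck_on_mult m f g : Ck_on U m f -> Ck_on U m g -> Ck_on U m (fun t => f t * g t).
Proof.
  revert f g; induction m as [|m IH]; [trivial|]; intros f g Hf Hg.
  pose proof (Ck_on_S _ _ Hf) as Hf0; pose proof (Ck_on_S _ _ Hg) as Hg0.
  destruct Hf as [f' [Hf Hf']], Hg as [g' [Hg Hg']].
  exists (fun t => f' t * g t + f t * g' t); split.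
  - intros t Ht; exact (is_derive_Rmult _ _ _ _ _ (Hf t Ht) (Hg t Ht)).
  - apply Ck_on_plus; apply IH; assumption.
Qed.

Lemma Ck_on_inv m f : (forall t, U t -> f t <> 0) -> Ck_on U m f ->
  Ck_on U m (fun t => / f t).
Proof.
  intros Hnz; revert f Hnz; induction m as [|m IH]; [trivial|]; intros f Hnz Hf.
  pose proof (Ck_on_S _ _ Hf) as Hf0; destruct Hf as [f' [Hf Hf']].
  exists (fun t => - (f' t * (/ f t * / f t))); split.
  - intros t Ht; eapply is_derive_eq_val;
      [apply is_derive_inv; [exact (Hf t Ht) | exact (Hnz t Ht)]|].
    change (- f' t / f t ^ 2 = - (f' t * (/ f t * / f t))); field; exact (Hnz t Ht).
  - apply Ck_on_opp, Ck_on_mult; [exact Hf'|]; apply Ck_on_mult; apply IH; assumption.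
Qed.

Lemma Cinf_on_plus f g : Cinf_on U f -> Cinf_on U g -> Cinf_on U (fun t => f t + g t).
Proof. intros Hf Hg m; apply Ck_on_plus; [apply Hf | apply Hg]. Qed.

Lemma Cinf_on_opp f : Cinf_on U f -> Cinf_on U (fun t => - f t).
Proof. intros Hf m; apply Ck_on_opp, Hf. Qed.

Lemma Cinf_on_mult f g : Cinf_on U f -> Cinf_on U g -> Cinf_on U (fun t => f t * g t).
Proof. intros Hf Hg m; apply Ck_on_mult; [apply Hf | apply Hg]. Qed.

Lemma Cinf_on_inv f : (forall t, U t -> f t <> 0) -> Cinf_on U f -> Cinf_on U (fun t => / f t).
Proof. intros Hnz Hf m; apply Ck_on_inv; [exact Hnz | apply Hf]. Qed.

Lemma Cinf_on_ex_derive f t : Cinf_on U f -> U t -> ex_derive f t.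
Proof. intros Hf Ht; destruct (Hf 1%nat) as [f' [Hf' _]]; exists (f' t); exact (Hf' t Ht). Qed.

Lemma Cinf_on_continuous f t : Cinf_on U f -> U t -> continuous f t.
Proof.
  intros Hf Ht; apply (ex_derive_continuous (K := R_AbsRing) (V := R_NormedModule)).
  exact (Cinf_on_ex_derive f t Hf Ht).
Qed.

Lemma Cinf_on_Derive f : open U -> Cinf_on U f -> Cinf_on U (Derive f).
Proof.
  intros HU Hf m; destruct (Hf (S m)) as [f' [Hf' Hm]].
  apply Ck_on_ext with f'; [exact HU | | exact Hm].
  intros t Ht; symmetry; apply is_derive_unique, Hf', Ht.
Qed.

End SmoothOn.

Lemma Cinf_on_of_smooth_on a b f : smooth_on a b f -> Cinf_on (in_I a b) f.
Proof.
  intros Hf m; change f with (Derive_n f 0); generalize 0%nat.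
  induction m as [|m IH]; intros k; [exact I|].
  exists (Derive_n f (S k)); split; [|apply IH].
  intros t Ht; apply Derive_correct, Hf, Ht.
Qed.

Lemma open_in_I a b : open (in_I a b).
Proof. apply open_and; [apply open_Rbar_gt | apply open_Rbar_lt]. Qed.

Lemma Mpow_sqr_norm k v :
  fst (Mpow k v) ^ 2 + snd (Mpow k v) ^ 2 = fst v ^ 2 + snd v ^ 2.
Proof.
  induction k as [|k IH]; [reflexivity|].
  rewrite <- IH; simpl; destruct (Mpow k v); simpl; ring.
Qed.

Lemma orth_unit_decomp x y u v : u ^ 2 + v ^ 2 = 1 -> x * u + y * v = 0 ->
  x = (x * - v + y * u) * - v /\ y = (x * - v + y * u) * u.
Proof.
  intros Hn Ho; split.
  - transitivity (x * (u ^ 2 + v ^ 2) - u * (x * u + y * v)); [rewrite Hn, Ho|]; ring.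
  - transitivity (y * (u ^ 2 + v ^ 2) - v * (x * u + y * v)); [rewrite Hn, Ho|]; ring.
Qed.

Lemma Derive_unit_orth U (u v : R -> R) t : open U -> U t ->
  (forall s, U s -> u s ^ 2 + v s ^ 2 = 1) -> ex_derive u t -> ex_derive v t ->
  Derive u t * u t + Derive v t * v t = 0.
Proof.
  intros HU Ht Hn Hu Hv.
  assert (D : is_derive (fun s => u s * u s + v s * v s) t
                (Derive u t * u t + u t * Derive u t + (Derive v t * v t + v t * Derive v t))).
  { apply (is_derive_plus (fun s => u s * u s) (fun s => v s * v s));
      apply is_derive_Rmult; apply Derive_correct; assumption. }
  assert (D1 : is_derive (fun s => u s * u s + v s * v s) t 0).
  { apply is_derive_ext_loc with (fun _ => 1).
    - generalize (HU t Ht); apply filter_imp; intros s Hs.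
      change (1 = u s * u s + v s * v s); rewrite <- (Hn s Hs); ring.
    - apply (is_derive_const (K := R_AbsRing) (V := R_NormedModule)). }
  pose proof (is_derive_unique _ _ _ D) as E; rewrite (is_derive_unique _ _ _ D1) in E; lra.
Qed.

Section Front.
Variables (a b : Rbar) (g1 g2 n1 n2 : R -> R).
Hypothesis Hfront : front_with a b g1 g2 n1 n2.
Hypothesis Hell : forall t, in_I a b t -> ell n1 n2 t <> 0.

Lemma Cinf_on_front :
  Cinf_on (in_I a b) g1 /\ Cinf_on (in_I a b) g2 /\
  Cinf_on (in_I a b) n1 /\ Cinf_on (in_I a b) n2.
Proof.
  destruct Hfront as [S1 [S2 [S3 [S4 _]]]].
  repeat split; apply Cinf_on_of_smooth_on; assumption.
Qed.

Lemma front_frenet t : in_I a b t ->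
  Derive n1 t = ell n1 n2 t * - n2 t /\ Derive n2 t = ell n1 n2 t * n1 t /\
  Derive g1 t = beta g1 g2 n1 n2 t * - n2 t /\ Derive g2 t = beta g1 g2 n1 n2 t * n1 t.
Proof.
  intros Ht; destruct Hfront as [_ [_ [_ [_ [Hn [Ho _]]]]]].
  destruct Cinf_on_front as [_ [_ [C1 C2]]].
  assert (Hnt := Hn t Ht).
  destruct (orth_unit_decomp (Derive n1 t) (Derive n2 t) (n1 t) (n2 t) Hnt
    (Derive_unit_orth _ n1 n2 t (open_in_I a b) Ht Hn
       (Cinf_on_ex_derive _ _ _ C1 Ht) (Cinf_on_ex_derive _ _ _ C2 Ht))) as [N1 N2].
  destruct (orth_unit_decomp (Derive g1 t) (Derive g2 t) (n1 t) (n2 t) Hnt (Ho t Ht))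
    as [G1 G2].
  repeat split; assumption.
Qed.

Lemma Cinf_on_ell : Cinf_on (in_I a b) (ell n1 n2).
Proof.
  destruct Cinf_on_front as [_ [_ [C1 C2]]].
  apply Cinf_on_plus; apply Cinf_on_mult; try apply Cinf_on_opp;
    try apply Cinf_on_Derive; try apply open_in_I; assumption.
Qed.

Lemma Cinf_on_betak k : Cinf_on (in_I a b) (betak g1 g2 n1 n2 k).
Proof.
  destruct Cinf_on_front as [G1 [G2 [C1 C2]]].
  induction k as [|k IH].
  - apply Cinf_on_plus; apply Cinf_on_mult; try apply Cinf_on_opp;
      try apply Cinf_on_Derive; try apply open_in_I; assumption.
  - apply Cinf_on_Derive; [apply open_in_I|].
    apply Cinf_on_mult; [exact IH|]; apply Cinf_on_inv; [exact Hell | exact Cinf_on_ell].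
Qed.

Lemma Cinf_on_betak_div_ell k :
  Cinf_on (in_I a b) (fun t => betak g1 g2 n1 n2 k t / ell n1 n2 t).
Proof.
  apply Cinf_on_mult; [apply Cinf_on_betak|].
  apply Cinf_on_inv; [exact Hell | exact Cinf_on_ell].
Qed.

Lemma is_derive_Mpow_nu k t : in_I a b t ->
  is_derive (fun s => fst (Mpow k (nuv n1 n2 s))) t
    (ell n1 n2 t * fst (Mpow (S k) (nuv n1 n2 t))) /\
  is_derive (fun s => snd (Mpow k (nuv n1 n2 s))) t
    (ell n1 n2 t * snd (Mpow (S k) (nuv n1 n2 t))).
Proof.
  intros Ht; destruct Cinf_on_front as [_ [_ [C1 C2]]].
  destruct (front_frenet t Ht) as [D1 [D2 _]].
  induction k as [|k [IH1 IH2]].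
  - split; eapply is_derive_eq_val;
      try apply Derive_correct, (Cinf_on_ex_derive _ _ _ C1 Ht);
      try apply Derive_correct, (Cinf_on_ex_derive _ _ _ C2 Ht); assumption.
  - split; simpl.
    + eapply is_derive_eq_val; [exact (is_derive_opp _ _ _ IH2)|].
      change (- (ell n1 n2 t * snd (Mpow (S k) (nuv n1 n2 t)))
              = ell n1 n2 t * - snd (Mpow (S k) (nuv n1 n2 t))); ring.
    + exact IH1.
Qed.

Lemma is_derive_Ev k t : in_I a b t ->
  is_derive (fun s => fst (Ev g1 g2 n1 n2 k s)) t
    (betak g1 g2 n1 n2 k t * fst (Mpow (S k) (nuv n1 n2 t))) /\
  is_derive (fun s => snd (Ev g1 g2 n1 n2 k s)) t
    (betak g1 g2 n1 n2 k t * snd (Mpow (S k) (nuv n1 n2 t))).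
Proof.
  intros Ht; destruct Cinf_on_front as [C1 [C2 _]].
  destruct (front_frenet t Ht) as [_ [_ [G1 G2]]].
  induction k as [|k [IH1 IH2]].
  - split; eapply is_derive_eq_val;
      try apply Derive_correct, (Cinf_on_ex_derive _ _ _ C1 Ht);
      try apply Derive_correct, (Cinf_on_ex_derive _ _ _ C2 Ht); assumption.
  - assert (Hq : is_derive (fun s => betak g1 g2 n1 n2 k s / ell n1 n2 s) t
                   (betak g1 g2 n1 n2 (S k) t))
      by exact (Derive_correct _ _ (Cinf_on_ex_derive _ _ _ (Cinf_on_betak_div_ell k) Ht)).
    destruct (is_derive_Mpow_nu k t Ht) as [M1 M2].
    pose proof (Hell t Ht) as Hlt.
    split; cbn [Ev fst snd]; eapply is_derive_eq_val.
    + exact (is_derive_minus _ _ _ _ _ IH1 (is_derive_Rmult _ _ _ _ _ Hq M1)).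
    + change (betak g1 g2 n1 n2 k t * fst (Mpow (S k) (nuv n1 n2 t)) -
        (betak g1 g2 n1 n2 (S k) t * fst (Mpow k (nuv n1 n2 t)) +
         betak g1 g2 n1 n2 k t / ell n1 n2 t * (ell n1 n2 t * fst (Mpow (S k) (nuv n1 n2 t))))
        = betak g1 g2 n1 n2 (S k) t * - fst (Mpow k (nuv n1 n2 t))); field; exact Hlt.
    + exact (is_derive_minus _ _ _ _ _ IH2 (is_derive_Rmult _ _ _ _ _ Hq M2)).
    + change (betak g1 g2 n1 n2 k t * snd (Mpow (S k) (nuv n1 n2 t)) -
        (betak g1 g2 n1 n2 (S k) t * snd (Mpow k (nuv n1 n2 t)) +
         betak g1 g2 n1 n2 k t / ell n1 n2 t * (ell n1 n2 t * snd (Mpow (S k) (nuv n1 n2 t))))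
        = betak g1 g2 n1 n2 (S k) t * - snd (Mpow k (nuv n1 n2 t))); field; exact Hlt.
Qed.

Lemma betak_eq0_of_singular_Ev k t : in_I a b t ->
  singular_at (Ev g1 g2 n1 n2 k) t -> betak g1 g2 n1 n2 k t = 0.
Proof.
  intros Ht [S1 S2]; destruct (is_derive_Ev k t Ht) as [D1 D2].
  apply (eq_trans (eq_sym (is_derive_unique _ _ _ D1))) in S1.
  apply (eq_trans (eq_sym (is_derive_unique _ _ _ D2))) in S2.
  destruct Hfront as [_ [_ [_ [_ [Hn _]]]]].
  set (x := fst (Mpow (S k) (nuv n1 n2 t))) in *.
  set (y := snd (Mpow (S k) (nuv n1 n2 t))) in *.
  assert (N : x ^ 2 + y ^ 2 = 1) by (unfold x, y; rewrite Mpow_sqr_norm; exact (Hn t Ht)).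
  set (c := betak g1 g2 n1 n2 k t) in *.
  transitivity (c * x * x + c * y * y).
  - transitivity (c * (x ^ 2 + y ^ 2)); [rewrite N|]; ring.
  - rewrite S1, S2; ring.
Qed.

(* [beta_k = (beta_k / ell - 0) * ell] and [(beta_k / ell)' = beta_(k+1)]. *)
Lemma BigO_betak_descent n : in_I a b 0 ->
  (forall k, (k < n)%nat -> betak g1 g2 n1 n2 k 0 = 0) ->
  forall i, (i <= n)%nat -> BigO i (betak g1 g2 n1 n2 (n - i)).
Proof.
  intros H0 Hz; assert (HI := open_in_I a b 0 H0).
  induction i as [|i IH]; intros Hi.
  - rewrite Nat.sub_0_r; apply BigO_of_continuous.
    exact (Cinf_on_continuous _ _ _ (Cinf_on_betak n) H0).
  - set (k := (n - S i)%nat).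
    replace (n - i)%nat with (S k) in IH by (unfold k; lia).
    set (q := fun t => betak g1 g2 n1 n2 k t / ell n1 n2 t).
    assert (Hq : BigO (S i) (fun s => q s - q 0)).
    { apply BigO_S_of_Derive; [|exact (IH ltac:(lia))].
      exact (filter_imp _ _ (fun s => Cinf_on_ex_derive _ _ _ (Cinf_on_betak_div_ell k)) HI). }
    apply BigO_ext_loc with (fun s => (q s - q 0) * ell n1 n2 s).
    + exact (BigO_mult_continuous _ _ _ Hq (Cinf_on_continuous _ _ _ Cinf_on_ell H0)).
    + generalize HI; apply filter_imp; intros s Hs.
      unfold q; rewrite (Hz k ltac:(unfold k; lia)).
      field; split; [exact (Hell 0 H0) | exact (Hell s Hs)].
Qed.

Lemma BigO_front_curve n : in_I a b 0 -> BigO n (beta g1 g2 n1 n2) ->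
  BigO (S n) (fun s => g1 s - g1 0) /\ BigO (S n) (fun s => g2 s - g2 0).
Proof.
  intros H0 Hb; assert (HI := open_in_I a b 0 H0).
  destruct Cinf_on_front as [C1 [C2 [C3 C4]]].
  split; apply BigO_S_of_Derive.
  - exact (filter_imp _ _ (fun s => Cinf_on_ex_derive _ _ _ C1) HI).
  - apply BigO_ext_loc with (fun s => beta g1 g2 n1 n2 s * - n2 s).
    + exact (BigO_mult_continuous _ _ _ Hb (Cinf_on_continuous _ _ _ (Cinf_on_opp _ _ C4) H0)).
    + generalize HI; apply filter_imp; intros s Hs; symmetry; apply (front_frenet s Hs).
  - exact (filter_imp _ _ (fun s => Cinf_on_ex_derive _ _ _ C2) HI).
  - apply BigO_ext_loc with (fun s => beta g1 g2 n1 n2 s * n1 s).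
    + exact (BigO_mult_continuous _ _ _ Hb (Cinf_on_continuous _ _ _ C3 H0)).
    + generalize HI; apply filter_imp; intros s Hs; symmetry; apply (front_frenet s Hs).
Qed.

End Front.

Theorem mainTheorem4 (n : nat) (a b : Rbar) (g1 g2 n1 n2 : R -> R) :
  (2 <= n)%nat ->
  Rbar_lt a 0 -> Rbar_lt 0 b ->
  front_with a b g1 g2 n1 n2 ->
  (forall t, in_I a b t -> ell n1 n2 t <> 0) ->
  singular_at (fun t => (g1 t, g2 t)) 0 ->
  (forall k : nat, (1 <= k <= n - 1)%nat -> singular_at (Ev g1 g2 n1 n2 k) 0) ->
  ~ A_equiv_at0 (fun t => (g1 t, g2 t)) (Cusp n).
Proof.
  intros Hn Ha Hb Hfront Hell Hsing HEv.
  assert (H0 : in_I a b 0) by (split; assumption).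
  assert (Hz : forall k, (k < n)%nat -> betak g1 g2 n1 n2 k 0 = 0).
  { intros k Hk; apply (betak_eq0_of_singular_Ev a b); try assumption.
    destruct k as [|k]; [exact Hsing | apply HEv; lia]. }
  assert (Hbeta := BigO_betak_descent a b g1 g2 n1 n2 Hfront Hell n H0 Hz n (le_n n)).
  rewrite Nat.sub_diag in Hbeta.
  destruct (BigO_front_curve a b g1 g2 n1 n2 Hfront n H0 Hbeta) as [B1 B2].
  destruct (Cinf_on_front a b g1 g2 n1 n2 Hfront) as [C1 [C2 _]].
  apply not_A_equiv_Cusp_of_BigO; try assumption; [lia | |];
    apply (Cinf_on_continuous (in_I a b)); assumption.
Qed.
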